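(* Let $(\mathfrak J,B)$ be a pseudo-euclidean Jordan algebra and $\omega$ a bilinear form on $\mathfrak J$. Then $\omega$ is a symplectic form on $\mathfrak J$ if and only if there exists an invertible $B$-antisymmetric derivation $D$ of $\mathfrak J$ such that $\omega(x,y)=B(D(x),y)$ for all $x,y\in\mathfrak J$. In particular $\mathfrak J$ admits a symplectic form iff it admits an invertible $B$-antisymmetric derivation.
   Context: All algebras are finite-dimensional over a field of characteristic zero. A Jordan algebra is a commutative algebra with $x(yx^2)=(xy)x^2$; $(\mathfrak J,B)$ is pseudo-euclidean if $B$ is nondegenerate, symmetric, with $B(xy,z)=B(x,yz)$. A symplectic form on $\mathfrak J$ is a nondegenerate skew-symmetric bilinear form $\omega$ with $\omega(xy,z)+\omega(yz,x)+\omega(zx,y)=0$ for all $x,y,z$. $D$ is $B$-antisymmetric if $B(Dx,y)=-B(x,Dy)$; a derivation satisfies $D(xy)=D(x)y+xD(y)$. *)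

From HB Require Import structures.
From mathcomp Require Import all_boot all_order all_algebra.
Set Implicit Arguments. Unset Strict Implicit. Unset Printing Implicit Defensive.
Import GRing.Theory.
Local Open Scope ring_scope.

Section Defs.
Variables (F : fieldType) (V : vectType F).

Definition bilinear_prod (mul : V -> V -> V) : Prop :=
  (forall x, linear (mul x)) /\ (forall y, linear (fun x => mul x y)).

Definition bilinear_form (B : V -> V -> F) : Prop :=
  (forall x, linear (B x : V -> F^o)) /\ (forall y, linear ((fun x => B x y) : V -> F^o)).

Definition jordan (mul : V -> V -> V) : Prop :=
  (forall x y, mul x y = mul y x) /\
  (forall x y, mul x (mul y (mul x x)) = mul (mul x y) (mul x x)).

Definition nondegenerate (B : V -> V -> F) : Prop :=
  forall x, (forall y, B x y = 0) -> x = 0.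

Definition pseudo_euclidean (mul : V -> V -> V) (B : V -> V -> F) : Prop :=
  [/\ bilinear_form B, nondegenerate B,
      (forall x y, B x y = B y x) &
      (forall x y z, B (mul x y) z = B x (mul y z))].

Definition symplectic (mul : V -> V -> V) (w : V -> V -> F) : Prop :=
  [/\ nondegenerate w,
      (forall x y, w x y = - w y x) &
      (forall x y z, w (mul x y) z + w (mul y z) x + w (mul z x) y = 0)].

Definition B_antisymmetric (B : V -> V -> F) (D : V -> V) : Prop :=
  forall x y, B (D x) y = - B x (D y).

Definition derivation (mul : V -> V -> V) (D : V -> V) : Prop :=
  linear D /\ forall x y, D (mul x y) = mul (D x) y + mul x (D y).

End Defs.

(* A nondegenerate form identifies V with its dual, so every bilinear form [w]
   is [w x y = B (D x) y] for a unique linear map [D].  Invariance of [B] and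
   commutativity of the product turn the cyclic identity of [w] into the
   Leibniz rule for [D], skew-symmetry of [w] into [B]-antisymmetry of [D],
   and nondegeneracy of [w] into injectivity (hence bijectivity) of [D]. *)

From Pilot Require Import Defs.
From HB Require Import structures.
From mathcomp Require Import all_boot all_order all_algebra.
Set Implicit Arguments. Unset Strict Implicit. Unset Printing Implicit Defensive.
Import GRing.Theory.
Local Open Scope ring_scope.

Definition linear_of (F : fieldType) (U W : lmodType F) (f : U -> W)
    (hf : linear f) : {linear U -> W} :=
  HB.pack f (GRing.isLinear.Build _ _ _ _ f hf).

Lemma lin_inj_bijective (F : fieldType) (V : vectType F) (f : V -> V) :
  linear f -> injective f -> bijective f.
Proof.
move=> f_lin f_inj; pose L := linfun (linear_of f_lin).
have kerL : lker L == 0%VS by apply/lker0P => u v; rewrite !lfunE; exact: f_inj.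
exists (L^-1)%VF => x.
  by have := lker0_lfunK kerL x; rewrite lfunE.
by have := lker0_lfunVK kerL x; rewrite lfunE.
Qed.

Section NondegenerateForm.
Variables (F : fieldType) (V : vectType F) (B : V -> V -> F).
Hypotheses (hB : bilinear_form B) (B_nondeg : Defs.nondegenerate B).

Lemma form_scalel a x y z : B (a *: x + y) z = a * B x z + B y z.
Proof. exact: (hB.2 z a x y). Qed.

Lemma form_addl x y z : B (x + y) z = B x z + B y z.
Proof. exact: (raddfD (linear_of (hB.2 z))). Qed.

Lemma form_subl x y z : B (x - y) z = B x z - B y z.
Proof. exact: (raddfB (linear_of (hB.2 z))). Qed.

Lemma nondeg_form_inj x y : (forall z, B x z = B y z) -> x = y.
Proof.
move=> Bxy; apply/eqP; rewrite -subr_eq0; apply/eqP; apply: B_nondeg => z.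
by rewrite form_subl Bxy subrr.
Qed.

Definition form_functional (u : V) : 'Hom(V, F^o) := linfun (linear_of (hB.1 u)).

Lemma form_functional_linear : linear form_functional.
Proof.
by move=> a u v; apply/lfunP => y; rewrite !lfunE /= !lfunE /= !lfunE; exact: form_scalel.
Qed.

Definition form_dual : 'Hom(V, 'Hom(V, F^o)) :=
  linfun (linear_of form_functional_linear).

Lemma form_dualE u y : form_dual u y = B u y.
Proof. by rewrite !lfunE. Qed.

(* [form_dual] is injective and [dim 'Hom(V, F^o) = dim V * 1]. *)
Lemma form_dual_full : limg form_dual = fullv.
Proof.
have kerD : lker form_dual == 0%VS.
  apply/lker0P => u v /lfunP Duv; apply: nondeg_form_inj => y.
  by rewrite -!form_dualE Duv.
apply/eqP; rewrite eqEdim subvf /= limg_dim_eq; last by rewrite (eqP kerD) capv0.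
by rewrite !dimvf; change (dim V * 1 <= dim V)%N; rewrite muln1.
Qed.

Lemma form_dualVE (f : 'Hom(V, F^o)) y : B ((form_dual^-1)%VF f) y = f y.
Proof. by rewrite -form_dualE limg_lfunVK // form_dual_full memvf. Qed.

End NondegenerateForm.

Section InvariantForm.
Variables (F : fieldType) (V : vectType F) (mul : V -> V -> V) (B : V -> V -> F).
Hypotheses (mul_comm : forall x y, mul x y = mul y x) (hB : bilinear_form B)
  (B_nondeg : Defs.nondegenerate B) (B_sym : forall x y, B x y = B y x)
  (B_invariant : forall x y z, B (mul x y) z = B x (mul y z)).

Lemma form_comp_bilinear (D : V -> V) : linear D -> bilinear_form (fun x y => B (D x) y).
Proof.
move=> D_lin; split=> [x | y a u v /=]; first exact: hB.1.
by rewrite (D_lin a u v); exact: form_scalel.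
Qed.

Lemma form_invariant_sum p q x y z :
  B (mul p y + mul x q) z = B p (mul y z) + B q (mul z x).
Proof. by rewrite form_addl // B_invariant (mul_comm x q) B_invariant (mul_comm x z). Qed.

Lemma symplectic_of_derivation (w : V -> V -> F) (D : V -> V) :
  derivation mul D -> injective D -> B_antisymmetric B D ->
  (forall x y, w x y = B (D x) y) -> symplectic mul w.
Proof.
move=> [D_lin D_leibniz] D_inj D_anti wE.
have B_D_skew a b : B (D a) b = - B (D b) a by rewrite D_anti B_sym.
split.
- move=> x wx0; apply: D_inj; rewrite [D 0](raddf0 (linear_of D_lin)).
  by apply: B_nondeg => y; rewrite -wE.
- by move=> x y; rewrite !wE B_D_skew.
- move=> x y z; rewrite !wE D_leibniz form_invariant_sum (B_D_skew (mul y z)).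
  by rewrite (B_D_skew (mul z x)) addrAC addrK subrr.
Qed.

Lemma derivation_of_symplectic (w : V -> V -> F) (D : V -> V) :
  bilinear_form w -> symplectic mul w -> (forall x y, B (D x) y = w x y) ->
  [/\ derivation mul D, injective D & B_antisymmetric B D].
Proof.
move=> hw [w_nondeg w_skew w_cyclic] DE.
split; [split=> [a u v | x y] | move=> u v Duv | move=> x y].
- apply: (nondeg_form_inj hB B_nondeg) => z.
  by rewrite form_scalel // !DE; exact: (hw.2 z a u v).
- apply: (nondeg_form_inj hB B_nondeg) => z.
  rewrite form_invariant_sum !DE (w_skew x) (w_skew y) -opprD; apply/eqP.
  by rewrite -addr_eq0 addrA w_cyclic.
- by apply: (nondeg_form_inj hw w_nondeg) => z; rewrite -!DE Duv.
- by rewrite DE w_skew -DE B_sym.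
Qed.

Lemma symplectic_derivation (w : V -> V -> F) :
  bilinear_form w -> symplectic mul w ->
  exists D : V -> V, [/\ derivation mul D, bijective D, B_antisymmetric B D &
                         forall x y, w x y = B (D x) y].
Proof.
move=> hw w_sympl.
pose D x := ((form_dual hB)^-1)%VF (linfun (linear_of (hw.1 x))).
have DE x y : B (D x) y = w x y by rewrite form_dualVE // lfunE.
have [D_der D_inj D_anti] := derivation_of_symplectic hw w_sympl DE.
by exists D; split=> //; exact: lin_inj_bijective D_der.1 D_inj.
Qed.

End InvariantForm.

Theorem mainTheorem8 (F : fieldType) (V : vectType F)
  (mul : V -> V -> V) (B : V -> V -> F) :
  [pchar F] =i pred0 ->
  bilinear_prod mul -> jordan mul -> pseudo_euclidean mul B ->
  (forall w : V -> V -> F, bilinear_form w ->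
     (symplectic mul w <->
      exists D : V -> V,
        [/\ derivation mul D, bijective D, B_antisymmetric B D &
            forall x y, w x y = B (D x) y]))
  /\
  ((exists w : V -> V -> F, bilinear_form w /\ symplectic mul w) <->
   (exists D : V -> V,
      [/\ derivation mul D, bijective D & B_antisymmetric B D])).
Proof.
move=> _ _ [mul_comm _] [hB B_nondeg B_sym B_invariant].
have symplectic_iff w : bilinear_form w -> (symplectic mul w <->
    exists D : V -> V, [/\ derivation mul D, bijective D, B_antisymmetric B D &
                           forall x y, w x y = B (D x) y]).
  move=> hw; split; first exact: symplectic_derivation.
  case=> D [D_der /bij_inj D_inj D_anti wE].
  exact: (symplectic_of_derivation mul_comm hB B_nondeg B_sym B_invariant D_der).
split=> //; split.
- case=> w [hw /(symplectic_iff w hw) [D [D_der D_bij D_anti _]]].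
  by exists D.
- case=> D [D_der D_bij D_anti]; exists (fun x y => B (D x) y).
  have hw := form_comp_bilinear hB D_der.1.
  by split=> //; apply/(symplectic_iff _ hw); exists D.
Qed.
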